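(* Let $G$ be a free nilpotent group of class $d\in\mathbb{N}$ with free generators $g_i=g_{1,i}$, $i=1,\dots,n=\mathrm{rk}(G)$. Then for any $d'<d$ and any polynomial maps $\xi_i\colon G\to\mathbb{R}$, $i=1,\dots,n$, of degree at most $d'$, there is a polynomial map $\xi\colon G\to\mathbb{R}$ of degree at most $d'+1$ such that $\partial_{g_i}\xi=\xi_i$ for all $i$.
   Context: The free nilpotent group of class $d$ on $n$ generators is $F_n/(F_n)_{[d+1]}$ where $F_n$ is the free group and $(\cdot)_{[k]}$ the lower central series. $(\partial_g\xi)(h)=\xi(g^{-1}h)-\xi(h)$; $\xi$ is a polynomial of degree at most $d$ if $\partial_{g_1}\cdots\partial_{g_{d+1}}\xi\equiv0$ for all $g_1,\dots,g_{d+1}\in G$. *)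

From Stdlib Require Import Reals List Arith.
Open Scope R_scope.

(* A group: left identity and left inverse axioms suffice. *)
Record Group := MkGroup {
  gcar :> Type;
  gmul : gcar -> gcar -> gcar;
  ginv : gcar -> gcar;
  gone : gcar;
  gmulA : forall x y z, gmul x (gmul y z) = gmul (gmul x y) z;
  gmul1l : forall x, gmul gone x = x;
  gmulVl : forall x, gmul (ginv x) x = gone }.

Arguments gmul {G} : rename.
Arguments ginv {G} : rename.
Arguments gone {G} : rename.

Definition is_subgroup (G : Group) (S : G -> Prop) : Prop :=
  S gone /\ (forall x y, S x -> S y -> S (gmul x y)) /\ (forall x, S x -> S (ginv x)).

Definition generated (G : Group) (A : G -> Prop) (x : G) : Prop :=
  forall S : G -> Prop, is_subgroup G S -> (forall y, A y -> S y) -> S x.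

Definition gcomm (G : Group) (x y : G) : G :=
  gmul (gmul (ginv x) (ginv y)) (gmul x y).

(* lower central series: lcs G k = G_[k+1]; G_[1] = G, G_[k+1] = [G, G_[k]] *)
Fixpoint lcs (G : Group) (k : nat) : G -> Prop :=
  match k with
  | O => fun _ => True
  | S k' => generated G (fun z => exists x y, lcs G k' y /\ z = gcomm G x y)
  end.

Definition nilpotent_class_le (G : Group) (d : nat) : Prop :=
  forall x : G, lcs G d x -> x = gone.

Definition is_hom (G H : Group) (f : G -> H) : Prop :=
  forall x y, f (gmul x y) = gmul (f x) (f y).

(* G is the free nilpotent group of class d on the free generators g 0, ..., g (n-1):
   G is nilpotent of class <= d, generated by the g i, and free in the variety of
   nilpotent groups of class <= d with basis (g i)_{i<n} (universal property). *)
Definition is_free_nilpotent (G : Group) (d n : nat) (g : nat -> G) : Prop :=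
  nilpotent_class_le G d /\
  (forall x : G, generated G (fun y => exists i, (i < n)%nat /\ y = g i) x) /\
  (forall (H : Group), nilpotent_class_le H d ->
     forall h : nat -> H, exists f : G -> H,
       is_hom G H f /\ forall i, (i < n)%nat -> f (g i) = h i).

Definition gpartial (G : Group) (g : G) (xi : G -> R) : G -> R :=
  fun h => xi (gmul (ginv g) h) - xi h.

Definition iter_partial (G : Group) (gs : list G) (xi : G -> R) : G -> R :=
  fold_right (fun g f => gpartial G g f) xi gs.

Definition poly_deg_le (G : Group) (k : nat) (xi : G -> R) : Prop :=
  forall gs : list G, length gs = S k -> forall h : G, iter_partial G gs xi h = 0.

(* Polynomials of degree at most d' form a G-module P on which G acts by left translation, and
   the partial derivative along an element of the k-th term of the lower central series lowers
   the degree by k.  Hence the semidirect product P ⋊ G is again nilpotent of class at most d,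
   and the universal property of G yields a homomorphism g_i ↦ (ξ_i, g_i).  Its first component
   is a 1-cocycle c, and since every cocycle into functions on G is a coboundary,
   ξ(y) := -c(y)(y) satisfies ∂_a ξ = c(a) for all a; in particular ∂_{g_i} ξ = ξ_i and
   deg ξ ≤ d'+1. *)
From Stdlib Require Import Reals List Arith Lia Lra FunctionalExtensionality ProofIrrelevance.
Open Scope R_scope.

Lemma gmulV (G : Group) (x : G) : gmul x (ginv x) = gone.
Proof.
  set (y := gmul x (ginv x)).
  assert (Hyy : gmul y y = y).
  { unfold y. rewrite <- gmulA, (gmulA G (ginv x) x (ginv x)), gmulVl, gmul1l.
    reflexivity. }
  transitivity (gmul (gmul (ginv y) y) y).
  - rewrite gmulVl, gmul1l. reflexivity.
  - rewrite <- gmulA, Hyy, gmulVl. reflexivity.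
Qed.

Lemma gmul1r (G : Group) (x : G) : gmul x gone = x.
Proof. rewrite <- (gmulVl G x), gmulA, gmulV, gmul1l. reflexivity. Qed.

Lemma ginv_unique (G : Group) (u v : G) : gmul u v = gone -> u = ginv v.
Proof.
  intro Huv. rewrite <- (gmul1r G u), <- (gmulV G v), gmulA, Huv, gmul1l. reflexivity.
Qed.

Lemma ginvK (G : Group) (x : G) : ginv (ginv x) = x.
Proof. symmetry. apply ginv_unique, gmulV. Qed.

Lemma ginvM (G : Group) (a b : G) : ginv (gmul a b) = gmul (ginv b) (ginv a).
Proof.
  symmetry. apply ginv_unique.
  rewrite <- gmulA, (gmulA G (ginv a) a b), gmulVl, gmul1l, gmulVl. reflexivity.
Qed.

Lemma ginv1 (G : Group) : ginv (@gone G) = gone.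
Proof. symmetry. apply ginv_unique, gmul1l. Qed.

Lemma gmulVK (G : Group) (w x : G) : gmul (gmul w (ginv x)) x = w.
Proof. rewrite <- gmulA, gmulVl, gmul1r. reflexivity. Qed.

Lemma gmulKV (G : Group) (w x : G) : gmul (gmul w x) (ginv x) = w.
Proof. rewrite <- gmulA, gmulV, gmul1r. reflexivity. Qed.

(* Normal form: products associated to the left, inverses pushed onto the letters. *)
Global Hint Rewrite ginvM ginvK ginv1 gmulA gmulVl gmulV gmul1l gmul1r gmulVK gmulKV : gsimp.
Ltac gsimp := autorewrite with gsimp.

Lemma generated_is_subgroup (G : Group) (A : G -> Prop) : is_subgroup G (generated G A).
Proof.
  split; [|split].
  - intros P HP _. apply HP.
  - intros x y Hx Hy P HP HA. apply HP; [apply Hx | apply Hy]; assumption.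
  - intros x Hx P HP HA. apply HP, Hx; assumption.
Qed.

Lemma lcs_is_subgroup (G : Group) (k : nat) : is_subgroup G (lcs G k).
Proof.
  destruct k as [|k]; simpl.
  - split; [|split]; auto.
  - apply generated_is_subgroup.
Qed.

Lemma hom1 (G H : Group) (f : G -> H) : is_hom G H f -> f gone = gone.
Proof.
  intro Hf.
  assert (Hidem : gmul (f gone) (f gone) = f gone) by (rewrite <- Hf, gmul1l; reflexivity).
  rewrite <- (gmul1l H (f gone)), <- (gmulVl H (f gone)), <- gmulA, Hidem.
  reflexivity.
Qed.

Lemma homV (G H : Group) (f : G -> H) : is_hom G H f -> forall x, f (ginv x) = ginv (f x).
Proof. intros Hf x. apply ginv_unique. rewrite <- Hf, gmulVl. apply hom1, Hf. Qed.

Lemma hom_fix_generated (G : Group) (A : G -> Prop) (s : G -> G) :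
  is_hom G G s -> (forall y, A y -> s y = y) -> forall x, generated G A x -> s x = x.
Proof.
  intros Hs HA x Hx. apply (Hx (fun x => s x = x)); [|exact HA].
  split; [|split].
  - apply hom1, Hs.
  - intros a b Ha Hb. rewrite Hs, Ha, Hb. reflexivity.
  - intros a Ha. rewrite homV, Ha; auto.
Qed.

Definition ltrans (G : Group) (a : G) (f : G -> R) : G -> R := fun h => f (gmul (ginv a) h).

Lemma gpartial1 (G : Group) (f : G -> R) : gpartial G gone f = fun _ => 0.
Proof. extensionality h. unfold gpartial. gsimp. ring. Qed.

Lemma gpartialM (G : Group) (x y : G) (f : G -> R) :
  gpartial G (gmul x y) f = fun h => ltrans G x (gpartial G y f) h + gpartial G x f h.
Proof. extensionality h. unfold gpartial, ltrans. gsimp. ring. Qed.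

Lemma gpartialV (G : Group) (x : G) (f : G -> R) :
  gpartial G (ginv x) f = fun h => - ltrans G (ginv x) (gpartial G x f) h.
Proof. extensionality h. unfold gpartial, ltrans. gsimp. ring. Qed.

Lemma gpartial_comm (G : Group) (x y : G) (f : G -> R) :
  gpartial G (gcomm G x y) f =
  ltrans G (gmul (ginv x) (ginv y))
    (fun h => gpartial G x (gpartial G y f) h - gpartial G y (gpartial G x f) h).
Proof. extensionality h. unfold gpartial, ltrans, gcomm. gsimp. ring. Qed.

Lemma gpartial_ltrans (G : Group) (a b : G) (f : G -> R) :
  gpartial G b (ltrans G a f) = ltrans G a (gpartial G (gmul (gmul (ginv a) b) a) f).
Proof. extensionality h. unfold gpartial, ltrans. gsimp. reflexivity. Qed.

(* [poly_deg_le G k] is [deg_lt G (S k)]. *)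
Definition deg_lt (G : Group) (m : nat) (f : G -> R) : Prop :=
  forall gs : list G, length gs = m -> forall h : G, iter_partial G gs f h = 0.

Section DegreeFiltration.
Variable G : Group.

Lemma deg_lt0 (f : G -> R) : deg_lt G 0 f <-> forall h, f h = 0.
Proof.
  split.
  - intros Hf h. apply (Hf nil eq_refl).
  - intros Hf [|g gs] Hl h; [apply Hf | discriminate].
Qed.

Lemma deg_ltS (m : nat) (f : G -> R) :
  deg_lt G (S m) f <-> forall g, deg_lt G m (gpartial G g f).
Proof.
  assert (Happ : forall gs g, iter_partial G (gs ++ g :: nil) f
                              = iter_partial G gs (gpartial G g f)).
  { intros gs g. unfold iter_partial. rewrite fold_right_app. reflexivity. }
  split.
  - intros Hf g gs Hl h. rewrite <- Happ. apply Hf.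
    rewrite length_app; simpl; lia.
  - intros Hf gs. destruct gs as [|x l _] using rev_ind; [discriminate|].
    intros Hl h. rewrite Happ. apply Hf.
    rewrite length_app in Hl; simpl in Hl; lia.
Qed.

Lemma deg_lt_zero (m : nat) : deg_lt G m (fun _ => 0).
Proof.
  induction m as [|m IHm].
  - apply deg_lt0. reflexivity.
  - apply deg_ltS. intro g.
    replace (gpartial G g (fun _ => 0)) with (fun _ : G => 0)
      by (extensionality h; unfold gpartial; ring).
    exact IHm.
Qed.

Lemma deg_ltD (m : nat) (f e : G -> R) :
  deg_lt G m f -> deg_lt G m e -> deg_lt G m (fun h => f h + e h).
Proof.
  revert f e; induction m as [|m IHm]; intros f e Hf He.
  - apply deg_lt0. intro h. rewrite (proj1 (deg_lt0 f) Hf), (proj1 (deg_lt0 e) He). ring.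
  - apply deg_ltS. intro g.
    replace (gpartial G g (fun h => f h + e h))
      with (fun h => gpartial G g f h + gpartial G g e h)
      by (extensionality h; unfold gpartial; ring).
    apply IHm; apply deg_ltS; assumption.
Qed.

Lemma deg_ltN (m : nat) (f : G -> R) : deg_lt G m f -> deg_lt G m (fun h => - f h).
Proof.
  revert f; induction m as [|m IHm]; intros f Hf.
  - apply deg_lt0. intro h. rewrite (proj1 (deg_lt0 f) Hf). ring.
  - apply deg_ltS. intro g.
    replace (gpartial G g (fun h => - f h)) with (fun h => - gpartial G g f h)
      by (extensionality h; unfold gpartial; ring).
    apply IHm, deg_ltS, Hf.
Qed.

Lemma deg_ltB (m : nat) (f e : G -> R) :
  deg_lt G m f -> deg_lt G m e -> deg_lt G m (fun h => f h - e h).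
Proof. intros Hf He. apply (deg_ltD m f (fun h => - e h)); [|apply deg_ltN]; assumption. Qed.

Lemma deg_lt_ltrans (m : nat) (a : G) (f : G -> R) :
  deg_lt G m f -> deg_lt G m (ltrans G a f).
Proof.
  revert a f; induction m as [|m IHm]; intros a f Hf.
  - apply deg_lt0. intro h. apply (proj1 (deg_lt0 f) Hf).
  - apply deg_ltS. intro g. rewrite gpartial_ltrans. apply IHm, deg_ltS, Hf.
Qed.

Lemma deg_lt_leS (m : nat) (f : G -> R) : deg_lt G m f -> deg_lt G (S m) f.
Proof.
  intros Hf [|a gs] Hl h; [discriminate|]. simpl in Hl |- *. unfold gpartial.
  rewrite !(Hf gs ltac:(lia)). ring.
Qed.

Lemma deg_lt_le (m m' : nat) (f : G -> R) : (m <= m')%nat -> deg_lt G m f -> deg_lt G m' f.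
Proof. induction 1; auto using deg_lt_leS. Qed.

Lemma deg_lt_gpartial (m : nat) (a : G) (f : G -> R) :
  deg_lt G m f -> deg_lt G (m - 1) (gpartial G a f).
Proof.
  destruct m as [|m]; intro Hf.
  - apply deg_lt0. intro h. unfold gpartial. rewrite !(proj1 (deg_lt0 f) Hf). ring.
  - replace (S m - 1)%nat with m by lia. apply deg_ltS, Hf.
Qed.

Definition lowers_deg (k : nat) (v : G) : Prop :=
  forall m f, deg_lt G (m + k) f -> deg_lt G m (gpartial G v f).

Lemma lowers_deg_subgroup (k : nat) : is_subgroup G (lowers_deg k).
Proof.
  split; [|split].
  - intros m f _. rewrite gpartial1. apply deg_lt_zero.
  - intros x y Hx Hy m f Hf. rewrite gpartialM.
    apply deg_ltD; [apply deg_lt_ltrans|]; auto.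
  - intros x Hx m f Hf. rewrite gpartialV. apply deg_ltN, deg_lt_ltrans; auto.
Qed.

Lemma lowers_deg_comm (k : nat) (x y : G) :
  lowers_deg k y -> lowers_deg (S k) (gcomm G x y).
Proof.
  intros Hy m f Hf. rewrite gpartial_comm. apply deg_lt_ltrans, deg_ltB.
  - apply deg_ltS, (Hy (S m)). replace (S m + k)%nat with (m + S k)%nat by lia. exact Hf.
  - apply Hy. replace (m + S k)%nat with (S (m + k)) in Hf by lia. apply deg_ltS, Hf.
Qed.

Lemma lcs_lowers_deg (k : nat) (v : G) : lcs G k v -> lowers_deg (S k) v.
Proof.
  revert v; induction k as [|k IHk]; intros v Hv.
  - intros m f Hf. replace (m + 1)%nat with (S m) in Hf by lia. apply deg_ltS, Hf.
  - apply Hv; [apply lowers_deg_subgroup|].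
    intros z [x [y [Hy ->]]]. apply lowers_deg_comm, IHk, Hy.
Qed.

End DegreeFiltration.

Section Semidirect.
Variables (G : Group) (m : nat).

Definition sd_car := { p : (G -> R) * G | deg_lt G m (fst p) }.

Definition sd_fun (p : sd_car) : G -> R := fst (proj1_sig p).
Definition sd_elt (p : sd_car) : G := snd (proj1_sig p).

Definition sd_mul (p q : sd_car) : sd_car :=
  exist _ (fun h => sd_fun p h + ltrans G (sd_elt p) (sd_fun q) h, gmul (sd_elt p) (sd_elt q))
    (deg_ltD G m _ _ (proj2_sig p) (deg_lt_ltrans G m _ _ (proj2_sig q))).

Definition sd_inv (p : sd_car) : sd_car :=
  exist _ (fun h => - ltrans G (ginv (sd_elt p)) (sd_fun p) h, ginv (sd_elt p))
    (deg_ltN G m _ (deg_lt_ltrans G m _ _ (proj2_sig p))).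

Definition sd_one : sd_car := exist _ (fun _ => 0, gone) (deg_lt_zero G m).

Lemma sd_eq (p q : sd_car) :
  (forall h, sd_fun p h = sd_fun q h) -> sd_elt p = sd_elt q -> p = q.
Proof.
  destruct p as [[f a] Hp], q as [[e b] Hq]; unfold sd_fun, sd_elt; simpl; intros Hfe Hab.
  assert (f = e) by (extensionality h; apply Hfe). subst.
  f_equal. apply proof_irrelevance.
Qed.

Lemma sd_mulA (x y z : sd_car) : sd_mul x (sd_mul y z) = sd_mul (sd_mul x y) z.
Proof.
  apply sd_eq; unfold sd_mul, sd_inv, sd_one, sd_fun, sd_elt, ltrans; simpl;
    [intro h; gsimp; ring | gsimp; reflexivity].
Qed.

Lemma sd_mul1l (x : sd_car) : sd_mul sd_one x = x.
Proof.
  apply sd_eq; unfold sd_mul, sd_inv, sd_one, sd_fun, sd_elt, ltrans; simpl;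
    [intro h; gsimp; ring | gsimp; reflexivity].
Qed.

Lemma sd_mulVl (x : sd_car) : sd_mul (sd_inv x) x = sd_one.
Proof.
  apply sd_eq; unfold sd_mul, sd_inv, sd_one, sd_fun, sd_elt, ltrans; simpl;
    [intro h; gsimp; ring | gsimp; reflexivity].
Qed.

Definition semidirect : Group :=
  MkGroup sd_car sd_mul sd_inv sd_one sd_mulA sd_mul1l sd_mulVl.

Lemma sd_fun_comm (x y : semidirect) :
  sd_fun (gcomm semidirect x y) =
  fun h => ltrans G (ginv (sd_elt x)) (gpartial G (ginv (sd_elt y)) (sd_fun x)) h
           + ltrans G (gmul (ginv (sd_elt x)) (ginv (sd_elt y)))
               (gpartial G (sd_elt x) (sd_fun y)) h.
Proof.
  extensionality h.
  change (gcomm semidirect x y) with (sd_mul (sd_mul (sd_inv x) (sd_inv y)) (sd_mul x y)).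
  unfold sd_mul, sd_inv, sd_fun, sd_elt, ltrans, gpartial; simpl.
  gsimp. ring.
Qed.

Lemma semidirect_lcs (k : nat) (z : semidirect) :
  lcs semidirect k z -> lcs G k (sd_elt z) /\ deg_lt G (m - k) (sd_fun z).
Proof.
  revert z; induction k as [|k IHk]; intros z Hz.
  - split; [exact I|]. rewrite Nat.sub_0_r. exact (proj2_sig z).
  - destruct (lcs_is_subgroup G (S k)) as [Hl1 [HlM HlV]].
    apply Hz.
    + split; [|split].
      * split; [exact Hl1 | apply deg_lt_zero].
      * intros x y [Hx1 Hx2] [Hy1 Hy2]. split; [apply HlM; auto|].
        apply deg_ltD; [|apply deg_lt_ltrans]; auto.
      * intros x [Hx1 Hx2]. split; [apply HlV; auto|].
        apply deg_ltN, deg_lt_ltrans; auto.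
    + intros w [x [y [Hy ->]]]. destruct (IHk y Hy) as [Hy1 Hy2]. split.
      * intros P HP HA. apply HA. exists (sd_elt x), (sd_elt y). split; [exact Hy1 | reflexivity].
      * rewrite sd_fun_comm.
        apply deg_ltD; apply deg_lt_ltrans.
        -- apply (lcs_lowers_deg G k (ginv (sd_elt y))).
           ++ apply (lcs_is_subgroup G k), Hy1.
           ++ apply (deg_lt_le G m); [lia | exact (proj2_sig x)].
        -- replace (m - S k)%nat with (m - k - 1)%nat by lia.
           apply deg_lt_gpartial, Hy2.
Qed.

Lemma semidirect_nilpotent (d : nat) :
  (m <= d)%nat -> nilpotent_class_le G d -> nilpotent_class_le semidirect d.
Proof.
  intros Hmd HG z Hz. destruct (semidirect_lcs d z Hz) as [Helt Hfun].
  apply sd_eq.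
  - replace (m - d)%nat with 0%nat in Hfun by lia. apply deg_lt0, Hfun.
  - apply HG, Helt.
Qed.

Lemma semidirect_section_coboundary (phi : G -> semidirect) :
  is_hom G semidirect phi -> (forall a, sd_elt (phi a) = a) ->
  exists xi : G -> R, deg_lt G (S m) xi /\ forall a, gpartial G a xi = sd_fun (phi a).
Proof.
  intros Hphi Hsec.
  assert (Hcocycle : forall a b x,
             sd_fun (phi (gmul a b)) x = sd_fun (phi a) x + sd_fun (phi b) (gmul (ginv a) x)).
  { intros a b x. rewrite Hphi.
    change (sd_fun (phi a) x + ltrans G (sd_elt (phi a)) (sd_fun (phi b)) x
            = sd_fun (phi a) x + sd_fun (phi b) (gmul (ginv a) x)).
    unfold ltrans. rewrite Hsec. reflexivity. }
  exists (fun y => - sd_fun (phi y) y).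
  assert (Hpartial : forall a, gpartial G a (fun y => - sd_fun (phi y) y) = sd_fun (phi a)).
  { intro a. extensionality x. unfold gpartial.
    pose proof (Hcocycle a (gmul (ginv a) x) x) as Hx.
    rewrite gmulA, gmulV, gmul1l in Hx. lra. }
  split; [|exact Hpartial].
  apply deg_ltS. intro a. rewrite Hpartial. exact (proj2_sig (phi a)).
Qed.

End Semidirect.

Theorem lemma7p13 (G : Group) (d n : nat) (g : nat -> G)
  (Hfree : is_free_nilpotent G d n g)
  (d' : nat) (Hd' : (d' < d)%nat)
  (xis : nat -> G -> R)
  (Hxi : forall i, (i < n)%nat -> poly_deg_le G d' (xis i)) :
  exists xi : G -> R, poly_deg_le G (S d') xi /\
    forall i, (i < n)%nat -> forall h : G, gpartial G (g i) xi h = xis i h.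
Proof.
  destruct Hfree as [Hnil [Hgen Huniv]].
  set (lift := fun i => match lt_dec i n with
     | left Hi => (exist _ (xis i, g i) (Hxi i Hi) : semidirect G (S d'))
     | right _ => sd_one G (S d') end).
  assert (Hlift : forall i, (i < n)%nat ->
            sd_fun G (S d') (lift i) = xis i /\ sd_elt G (S d') (lift i) = g i).
  { intros i Hi. unfold lift. destruct (lt_dec i n); [split; reflexivity | contradiction]. }
  destruct (Huniv _ (semidirect_nilpotent G (S d') d Hd' Hnil) lift) as [phi [Hphi Hgens]].
  assert (Hsec : forall a, sd_elt G (S d') (phi a) = a).
  { intro a. eapply (hom_fix_generated G _ (fun a => sd_elt G (S d') (phi a))); [| |apply Hgen].
    - intros x y. rewrite Hphi. reflexivity.
    - intros y [i [Hi ->]]. rewrite Hgens by exact Hi. apply Hlift, Hi. }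
  destruct (semidirect_section_coboundary G (S d') phi Hphi Hsec) as [xi [Hdeg Hxi_partial]].
  exists xi. split; [exact Hdeg|].
  intros i Hi h. rewrite Hxi_partial, Hgens by exact Hi. rewrite (proj1 (Hlift i Hi)).
  reflexivity.
Qed.
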